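(* Let $A$ be a finite-dimensional Hopf algebra over $k$ and $\tau$ a Hopf automorphism of $A$ whose order divides $m$. (i) If $\Lambda_r$ is a right integral of $A$ and $\lambda_r$ a right integral of $A^*$ with $\lambda_r(\Lambda_r)=1$, then $\nu_{m,\tau}(A)=\lambda_r\big(\Lambda_r^{[m,\tau]}\big)$. (ii) If $\Lambda_l$ is a left integral of $A$ and $\lambda_l$ a left integral of $A^*$ with $\lambda_l(\Lambda_l)=1$, then $\nu_{m,\tau}(A)=\lambda_l\big(\tau^{-1}\cdot\Lambda_l^{[m,\tau^{-1}]}\big)$.
   Context: For $a\in A$, $P_{m-1,\tau}(a)=\sum(\tau^{m-1}\cdot a_1)(\tau^{m-2}\cdot a_2)\cdots(\tau\cdot a_{m-1})$ (Sweedler notation), and the $m$th twisted Frobenius–Schur indicator is $\nu_{m,\tau}(A)=\mathrm{Tr}(S\circ P_{m-1,\tau})$, the trace of the linear map $S\circ P_{m-1,\tau}:A\to A$. For a Hopf automorphism $\sigma$ and $h\in A$, $h^{[m,\sigma]}=\sum h_1(\sigma\cdot h_2)\cdots(\sigma^{m-1}\cdot h_m)$. *)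

(* A finite-dimensional Hopf algebra over a field k is given
   by structure constants with respect to a basis e_0,...,e_{n-1}; elements
   of A are row vectors 'rV[k]_n, elements of A (x) A are n x n matrices
   (x (x) y  <->  x^T *m y), and linear functionals (elements of A^* ) are
   column vectors 'cV[k]_n. *)
From HB Require Import structures.
From mathcomp Require Import all_boot all_order all_algebra.
Set Implicit Arguments. Unset Strict Implicit. Unset Printing Implicit Defensive.
Import Order.TTheory GRing.Theory Num.Theory.
Local Open Scope ring_scope.

Record hopf_data (k : fieldType) (n : nat) := HopfData {
  hmul : 'I_n -> 'I_n -> 'I_n -> k;     (* e_i e_j = sum_l hmul i j l e_l *)
  hunit : 'I_n -> k;                    (* 1 = sum_l hunit l e_l *)
  hcomul : 'I_n -> 'I_n -> 'I_n -> k;   (* Delta e_i = sum_{j,l} hcomul i j l e_j (x) e_l *)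
  hcounit : 'I_n -> k;
  hanti : 'M[k]_n                       (* S x = x *m hanti *)
}.

Section HopfDefs.
Variables (k : fieldType) (n : nat) (H : hopf_data k n).

Definition bvec (i : 'I_n) : 'rV[k]_n := delta_mx 0 i.

Definition mulA (x y : 'rV[k]_n) : 'rV[k]_n :=
  \row_l \sum_i \sum_j x 0 i * y 0 j * hmul H i j l.
Definition oneA : 'rV[k]_n := \row_l hunit H l.
Definition comulA (x : 'rV[k]_n) : 'M[k]_n :=
  \matrix_(j, l) \sum_i x 0 i * hcomul H i j l.
Definition epsA (x : 'rV[k]_n) : k := \sum_i x 0 i * hcounit H i.
Definition antiA (x : 'rV[k]_n) : 'rV[k]_n := x *m hanti H.

Definition is_hopf : Prop :=
  [/\ (forall x y z, mulA (mulA x y) z = mulA x (mulA y z)),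
      (forall x, mulA oneA x = x /\ mulA x oneA = x),
      (* coassociativity *)
      (forall i j1 j2 j3,
         \sum_l hcomul H i l j3 * hcomul H l j1 j2
         = \sum_l hcomul H i j1 l * hcomul H l j2 j3),
      (* counit *)
      (forall i j, \sum_l hcomul H i j l * hcounit H l = (j == i)%:R
                /\ \sum_l hcomul H i l j * hcounit H l = (j == i)%:R)
  & [/\ 
      (* Delta is an algebra map *)
       (forall x y, comulA (mulA x y) =
         \matrix_(j, l) \sum_a \sum_b \sum_c \sum_d
            comulA x a b * comulA y c d * hmul H a c j * hmul H b d l)
        /\ comulA oneA = oneA^T *m oneA,
      (forall x y, epsA (mulA x y) = epsA x * epsA y) /\ epsA oneA = 1
    & (* antipode: sum S(a_1) a_2 = eps(a) 1 = sum a_1 S(a_2) *)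
      (forall x, \sum_j \sum_l comulA x j l *: mulA (antiA (bvec j)) (bvec l)
                   = epsA x *: oneA
              /\ \sum_j \sum_l comulA x j l *: mulA (bvec j) (antiA (bvec l))
                   = epsA x *: oneA)]].

(* tau acts by x |-> x *m T *)
Definition is_hopf_aut (T : 'M[k]_n) : Prop :=
  [/\ T \in unitmx,
      (forall x y, mulA (x *m T) (y *m T) = mulA x y *m T) /\
      oneA *m T = oneA,
      (forall x, comulA (x *m T) = T^T *m comulA x *m T),
      (forall x, epsA (x *m T) = epsA x)
    & (forall x, antiA (x *m T) = antiA x *m T)].

(* sw [:: F1; ...; Fr] a = sum (F1 . a_1) (F2 . a_2) ... (Fr . a_r)
   (Sweedler notation, r-fold iterated coproduct); for r = 0 it is eps(a) 1. *)
Fixpoint sw (fs : seq 'M[k]_n) (x : 'rV[k]_n) : 'rV[k]_n :=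
  match fs with
  | [::] => epsA x *: oneA
  | F :: fs' => \sum_j \sum_l comulA x j l *: mulA (bvec j *m F) (sw fs' (bvec l))
  end.

(* P_{m-1,tau}(a) = sum (tau^{m-1} a_1) (tau^{m-2} a_2) ... (tau a_{m-1}) *)
Definition Pmt (m : nat) (T : 'M[k]_n) (x : 'rV[k]_n) : 'rV[k]_n :=
  sw [seq T ^+ (m.-1 - i) | i <- iota 0 m.-1] x.

(* h^{[m,sigma]} = sum h_1 (sigma h_2) ... (sigma^{m-1} h_m) *)
Definition hbracket (m : nat) (Sg : 'M[k]_n) (h : 'rV[k]_n) : 'rV[k]_n :=
  sw [seq Sg ^+ i | i <- iota 0 m] h.

Definition mx_of_fun (f : 'rV[k]_n -> 'rV[k]_n) : 'M[k]_n :=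
  \matrix_(i, j) f (bvec i) 0 j.

Definition nu (m : nat) (T : 'M[k]_n) : k :=
  \tr (mx_of_fun (fun x => antiA (Pmt m T x))).

Definition evalf (phi : 'cV[k]_n) (x : 'rV[k]_n) : k := (x *m phi) 0 0.
(* product in A^* : (phi psi)(a) = sum phi(a_1) psi(a_2) *)
Definition dmul (phi psi : 'cV[k]_n) : 'cV[k]_n :=
  \col_i \sum_j \sum_l hcomul H i j l * phi j 0 * psi l 0.

Definition right_integral (L : 'rV[k]_n) : Prop :=
  forall x, mulA L x = epsA x *: L.
Definition left_integral (L : 'rV[k]_n) : Prop :=
  forall x, mulA x L = epsA x *: L.
(* the unit of A^* is eps, i.e. phi |-> phi(1) is the counit of A^* *)
Definition right_integral_dual (lam : 'cV[k]_n) : Prop :=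
  forall phi, dmul lam phi = evalf phi oneA *: lam.
Definition left_integral_dual (lam : 'cV[k]_n) : Prop :=
  forall phi, dmul phi lam = evalf phi oneA *: lam.

End HopfDefs.

From Pilot Require Import Defs.
From HB Require Import structures.
From mathcomp Require Import all_boot all_order all_algebra.
Set Implicit Arguments. Unset Strict Implicit. Unset Printing Implicit Defensive.
(* Defs is imported again so that [mulA] denotes Defs.mulA and not a lemma of fraction.v. *)
Import GRing.Theory Defs.
Local Open Scope ring_scope.

(* For normalized right integrals, S x = sum lambda(Lambda_(1) x) Lambda_(2), hence
   Tr (S o h) = lambda(Lambda_(1) h(Lambda_(2))) for every linear h; symmetrically,
   for left integrals S x = sum lambda(x Lambda_(2)) Lambda_(1) and
   Tr (S o h) = lambda(h(Lambda_(1)) Lambda_(2)).  Part (ii) follows at once, since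
   P_{m-1,tau}(Lambda_(1)) Lambda_(2) = tau^-1 . Lambda^[m,tau^-1] when tau^m = 1.
   For part (i), S is an algebra and coalgebra anti-morphism commuting with tau, so
   S o P_{m-1,tau} = Q o S with Q a = sum (tau a_(1)) ... (tau^(m-1) a_(m-1)), and
   cyclicity of the trace gives Tr (S o P_{m-1,tau}) = Tr (S o Q) = lambda(Lambda^[m,tau]).
   Both anti-morphism properties of S come from the uniqueness of convolution inverses. *)

Lemma rev_map_iota_sub (T : Type) (f : nat -> T) N :
  rev [seq f (N - i)%N | i <- iota 0 N] = [seq f i | i <- iota 1 N].
Proof.
elim: N => [//|N IH].
rewrite -[in RHS](addn1 N) iotaD map_cat cats1 -IH /= rev_cons subn0.
rewrite -[iota 1 N]/(iota (1 + 0) N) iotaDl -map_comp add1n; congr (rcons (rev _) _).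
Qed.

Lemma exprS_linv_cyclic (R : pzRingType) (x y : R) N i :
  y * x = 1 -> x ^+ N.+1 = 1 -> (i <= N)%N -> y ^+ i.+1 = x ^+ (N - i).
Proof.
move=> yx1 xN1 le_iN.
have yxj j : y ^+ j * x ^+ j = 1.
  elim: j => [|j IH]; first by rewrite !expr0 mulr1.
  by rewrite exprSr exprS mulrA -(mulrA _ y) yx1 mulr1 IH.
by rewrite -[RHS]mul1r -(yxj i.+1) -mulrA -exprD addSn subnKC // xN1 mulr1.
Qed.

Section HopfAlgebra.
Variables (k : fieldType) (n : nat) (H : hopf_data k n).
Local Notation A := 'rV[k]_n.
Local Notation e := (@bvec k n).
Local Notation mul := (mulA H).
Local Notation S := (antiA H).
Local Notation eps := (epsA H).
Local Notation one := (oneA H).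
Local Notation bilinear f := (bilinear_for *:%R *:%R f).

Lemma bvecE i j : e i 0 j = (j == i)%:R.
Proof. by rewrite mxE eqxx. Qed.

Lemma sum_bvecZ (V : lmodType k) (F : 'I_n -> V) i : \sum_p e i 0 p *: F p = F i.
Proof.
rewrite (bigD1 i) //= bvecE eqxx scale1r big1 ?addr0 // => p /negbTE pi.
by rewrite bvecE pi scale0r.
Qed.

Lemma sum_bvecM (F : 'I_n -> k) i : \sum_p e i 0 p * F p = F i.
Proof. exact: (@sum_bvecZ k^o). Qed.

Lemma linear_sum (U V : lmodType k) (f : U -> V) (hf : linear f)
    {I : Type} {r : seq I} {P : pred I} {F : I -> U} :
  f (\sum_(i <- r | P i) F i) = \sum_(i <- r | P i) f (F i).
Proof.
by have [f0 fD] := GRing.nmod_morphism_semilinear (GRing.semilinear_linear hf); apply: big_morph.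
Qed.

Section LinearMaps.
Variable V : lmodType k.
Implicit Types (f g : A -> V) (x : A).

Lemma linear_bvec_expand f x : linear f -> f x = \sum_i x 0 i *: f (e i).
Proof.
move=> hf; rewrite {1}[x]row_sum_delta (linear_sum hf).
by apply: eq_bigr => i _; rewrite (scalable_linear hf).
Qed.

Lemma linear_bvec_eq f g :
  linear f -> linear g -> (forall i, f (e i) = g (e i)) -> f =1 g.
Proof.
move=> hf hg fg x; rewrite (linear_bvec_expand x hf) (linear_bvec_expand x hg).
by apply: eq_bigr => i _; rewrite fg.
Qed.

Lemma linear_comp (h : A -> A) f : linear h -> linear f -> linear (f \o h).
Proof. by move=> hh hf a u v /=; rewrite hh hf. Qed.

Lemma linear_scale_const (phi : A -> k^o) (v : V) : linear phi -> linear (fun x => phi x *: v).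
Proof. by move=> hphi a x y; rewrite hphi scalerDl scalerA. Qed.

End LinearMaps.

Lemma mx_of_fun_comp (f g : A -> A) :
  linear g -> mx_of_fun (g \o f) = mx_of_fun f *m mx_of_fun g.
Proof.
move=> hg; apply/matrixP => i j; rewrite !mxE /= [f _]row_sum_delta.
rewrite (linear_sum hg) summxE; apply: eq_bigr => p _.
by rewrite (scalable_linear hg) !mxE.
Qed.

Lemma eq_mx_of_fun (f g : A -> A) : (forall i, f (e i) = g (e i)) -> mx_of_fun f = mx_of_fun g.
Proof. by move=> fg; apply/matrixP => i j; rewrite !mxE fg. Qed.

Lemma mxtrace_mx_of_fun_compC (f g : A -> A) : linear f -> linear g ->
  \tr (mx_of_fun (g \o f)) = \tr (mx_of_fun (f \o g)).
Proof. by move=> hf hg; rewrite (mx_of_fun_comp f hg) (mx_of_fun_comp g hf) mxtrace_mulC. Qed.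

Lemma linear_mulmxr (M : 'M[k]_n) : linear (fun x : A => x *m M).
Proof. by move=> a x y; rewrite mulmxDl scalemxAl. Qed.

Lemma linear_antiA : linear S.
Proof. exact: linear_mulmxr. Qed.

Lemma linear_mulAl y : linear (fun x => mul x y).
Proof.
move=> c x z; apply/rowP => l; rewrite !mxE mulr_sumr -big_split.
apply: eq_bigr => i _; rewrite mulr_sumr -big_split; apply: eq_bigr => j _.
by rewrite !mxE /= mulrDl mulrDl !mulrA.
Qed.

Lemma linear_mulAr x : linear (mul x).
Proof.
move=> c y z; apply/rowP => l; rewrite !mxE mulr_sumr -big_split.
apply: eq_bigr => i _; rewrite mulr_sumr -big_split; apply: eq_bigr => j _.
by rewrite !mxE /= mulrDr mulrDl !mulrA [x 0 i * c]mulrC.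
Qed.

Lemma linear_evalf (phi : 'cV[k]_n) : linear (evalf phi : A -> k^o).
Proof. by move=> a x y; rewrite /evalf mulmxDl -scalemxAl !mxE. Qed.

Lemma mulA_bvec i j l : mul (e i) (e j) 0 l = hmul H i j l.
Proof.
rewrite mxE (eq_bigr (fun p => e i 0 p * \sum_q e j 0 q * hmul H p q l)).
  by rewrite sum_bvecM sum_bvecM.
by move=> p _; rewrite mulr_sumr; apply: eq_bigr => q _; rewrite mulrA.
Qed.

Lemma comulA_bvec i j l : comulA H (e i) j l = hcomul H i j l.
Proof. by rewrite mxE sum_bvecM. Qed.

Lemma epsA_bvec i : eps (e i) = hcounit H i.
Proof. exact: sum_bvecM. Qed.

Lemma evalf_bvec (phi : 'cV[k]_n) i : evalf phi (e i) = phi i 0.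
Proof. by rewrite /evalf mxE sum_bvecM. Qed.

Lemma linear_epsA : linear (eps : A -> k^o).
Proof.
move=> a x y; rewrite /epsA [in RHS]/GRing.scale /= mulr_sumr -big_split.
by apply: eq_bigr => i _; rewrite !mxE mulrDl mulrA.
Qed.

Lemma exchange_big2 (V : nmodType) (F : 'I_n -> 'I_n -> 'I_n -> 'I_n -> V) :
  \sum_a \sum_b \sum_c \sum_d F a b c d = \sum_c \sum_d \sum_a \sum_b F a b c d.
Proof.
under eq_bigr do rewrite exchange_big; rewrite exchange_big; apply: eq_bigr => c _.
by under eq_bigr do rewrite exchange_big; rewrite exchange_big.
Qed.

(* [sweedler B x] is the Sweedler sum  sum B(x_(1), x_(2)),  B being given on basis indices. *)
Definition sweedler (V : lmodType k) (B : 'I_n -> 'I_n -> V) (x : A) : V :=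
  \sum_j \sum_l comulA H x j l *: B j l.

Section Sweedler.
Variable V : lmodType k.
Implicit Types B : 'I_n -> 'I_n -> V.

Lemma sweedler_bvec B i : sweedler B (e i) = \sum_j \sum_l hcomul H i j l *: B j l.
Proof. by apply: eq_bigr => j _; apply: eq_bigr => l _; rewrite comulA_bvec. Qed.

Lemma eq_sweedler B B' x : (forall j l, B j l = B' j l) -> sweedler B x = sweedler B' x.
Proof. by move=> eqB; apply: eq_bigr => j _; apply: eq_bigr => l _; rewrite eqB. Qed.

Lemma linear_sweedler B : linear (sweedler B).
Proof.
move=> a x y; rewrite /sweedler scaler_sumr -big_split; apply: eq_bigr => j _.
rewrite scaler_sumr -big_split; apply: eq_bigr => l _ /=.
rewrite scalerA -scalerDl !mxE mulr_sumr -big_split; congr (_ *: _).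
by apply: eq_bigr => i _; rewrite !mxE mulrDl mulrA.
Qed.

Lemma sweedlerZ B c x : sweedler (fun j l => c *: B j l) x = c *: sweedler B x.
Proof.
rewrite /sweedler scaler_sumr; apply: eq_bigr => j _; rewrite scaler_sumr.
by apply: eq_bigr => l _; rewrite !scalerA mulrC.
Qed.

Lemma sweedler_exchange (B2 : 'I_n -> 'I_n -> 'I_n -> 'I_n -> V) x y :
  sweedler (fun a b => sweedler (B2 a b) y) x =
  sweedler (fun c d => sweedler (fun a b => B2 a b c d) x) y.
Proof.
have expand (F : 'I_n -> 'I_n -> 'I_n -> 'I_n -> V) (p q : 'M[k]_n) :
    \sum_a \sum_b p a b *: \sum_c \sum_d q c d *: F a b c d =
    \sum_a \sum_b \sum_c \sum_d (p a b * q c d) *: F a b c d.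
  apply: eq_bigr => a _; apply: eq_bigr => b _; rewrite scaler_sumr.
  by apply: eq_bigr => c _; rewrite scaler_sumr; apply: eq_bigr => d _; rewrite scalerA.
rewrite /sweedler !expand exchange_big2; do 4!apply: eq_bigr => ? _.
by rewrite mulrC.
Qed.

Lemma linear_sweedler_in (F : 'I_n -> 'I_n -> A -> V) x :
  (forall a b, linear (F a b)) -> linear (fun w => sweedler (fun a b => F a b w) x).
Proof.
move=> hF c u v; rewrite -sweedlerZ /sweedler -big_split; apply: eq_bigr => a _.
by rewrite -big_split; apply: eq_bigr => b _; rewrite hF scalerDr !scalerA mulrC.
Qed.

End Sweedler.

Lemma sweedler_map (U V : lmodType k) (g : U -> V) (B : 'I_n -> 'I_n -> U) x :
  linear g -> g (sweedler B x) = sweedler (fun j l => g (B j l)) x.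
Proof.
move=> hg; rewrite /sweedler (linear_sum hg); apply: eq_bigr => j _.
by rewrite (linear_sum hg); apply: eq_bigr => l _; rewrite (scalable_linear hg).
Qed.

Lemma bilinear_bvec_expand (V : lmodType k) (f : A -> A -> V) u v :
  bilinear f -> f u v = \sum_j \sum_l (u 0 j * v 0 l) *: f (e j) (e l).
Proof.
case=> hl hr; rewrite (linear_bvec_expand _ (hl v)); apply: eq_bigr => j _.
by rewrite (linear_bvec_expand _ (hr _)) scaler_sumr; apply: eq_bigr => l _; rewrite scalerA.
Qed.

Hypothesis HH : is_hopf H.

Lemma mulAA x y z : mul (mul x y) z = mul x (mul y z).
Proof. by case: HH. Qed.

Lemma mul1A x : mul one x = x.
Proof. by case: HH => _ /(_ x)[]. Qed.

Lemma mulA1 x : mul x one = x.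
Proof. by case: HH => _ /(_ x)[]. Qed.

Lemma epsAM x y : eps (mul x y) = eps x * eps y.
Proof. by case: HH => _ _ _ _ [_ [] ]. Qed.

Lemma epsA1 : eps one = 1.
Proof. by case: HH => _ _ _ _ [_ [] ]. Qed.

Lemma sweedler_antipodel x : sweedler (fun j l => mul (S (e j)) (e l)) x = eps x *: one.
Proof. by case: HH => _ _ _ _ [_ _ /(_ x)[] ]. Qed.

Lemma sweedler_antipoder x : sweedler (fun j l => mul (e j) (S (e l))) x = eps x *: one.
Proof. by case: HH => _ _ _ _ [_ _ /(_ x)[] ]. Qed.

Section Counit.
Variables (V : lmodType k) (F : 'I_n -> V).

Let linear_coord_sum : linear (fun x : A => \sum_i x 0 i *: F i).
Proof.
move=> c x y; rewrite scaler_sumr -big_split; apply: eq_bigr => i _.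
by rewrite !mxE scalerDl scalerA.
Qed.

Lemma sweedler_counitl x : sweedler (fun a b => hcounit H a *: F b) x = \sum_i x 0 i *: F i.
Proof.
move: x; apply: (linear_bvec_eq (linear_sweedler _) linear_coord_sum) => i.
rewrite sweedler_bvec sum_bvecZ exchange_big -[RHS]sum_bvecZ; apply: eq_bigr => b _.
rewrite bvecE; case: HH => _ _ _ /(_ i b)[_ <-] _; rewrite scaler_suml.
by apply: eq_bigr => a _; rewrite scalerA.
Qed.

Lemma sweedler_counitr x : sweedler (fun a b => hcounit H b *: F a) x = \sum_i x 0 i *: F i.
Proof.
move: x; apply: (linear_bvec_eq (linear_sweedler _) linear_coord_sum) => i.
rewrite sweedler_bvec sum_bvecZ -[RHS]sum_bvecZ; apply: eq_bigr => a _.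
rewrite bvecE; case: HH => _ _ _ /(_ i a)[<- _] _; rewrite scaler_suml.
by apply: eq_bigr => b _; rewrite scalerA.
Qed.

Lemma sweedler_counitl_bvec i : sweedler (fun a b => hcounit H a *: F b) (e i) = F i.
Proof. by rewrite sweedler_counitl sum_bvecZ. Qed.

Lemma sweedler_counitr_bvec i : sweedler (fun a b => hcounit H b *: F a) (e i) = F i.
Proof. by rewrite sweedler_counitr sum_bvecZ. Qed.

End Counit.

(* Both sides are  sum G(x_(1), x_(2), x_(3)). *)
Lemma sweedler_coassoc (V : lmodType k) (G : 'I_n -> 'I_n -> 'I_n -> V) x :
  sweedler (fun a b => sweedler (fun c d => G c d b) (e a)) x =
  sweedler (fun a b => sweedler (fun c d => G a c d) (e b)) x.
Proof.
move: x; apply: linear_bvec_eq; [exact: linear_sweedler | exact: linear_sweedler |] => i.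
have nest (F : 'I_n -> 'I_n -> 'I_n -> 'I_n -> V) :
    \sum_a \sum_b hcomul H i a b *: \sum_c \sum_d F a b c d =
    \sum_a \sum_b \sum_c \sum_d hcomul H i a b *: F a b c d.
  by apply: eq_bigr => a _; apply: eq_bigr => b _; rewrite scaler_sumr;
     apply: eq_bigr => c _; rewrite scaler_sumr.
rewrite !sweedler_bvec.
under eq_bigr do under eq_bigr do rewrite sweedler_bvec.
under [RHS]eq_bigr do under eq_bigr do rewrite sweedler_bvec.
rewrite !nest.
transitivity (\sum_c \sum_d \sum_b
   (\sum_a hcomul H i a b * hcomul H a c d) *: G c d b).
  under eq_bigr do rewrite exchange_big; rewrite exchange_big.
  apply: eq_bigr => c _; under eq_bigr do rewrite exchange_big; rewrite exchange_big.
  apply: eq_bigr => d _; rewrite exchange_big; apply: eq_bigr => b _.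
  by rewrite scaler_suml; apply: eq_bigr => a _; rewrite scalerA.
apply: eq_bigr => a _.
transitivity (\sum_c \sum_d (\sum_b hcomul H i a b * hcomul H b c d) *: G a c d);
  last first.
  rewrite [RHS]exchange_big; apply: eq_bigr => c _; rewrite [RHS]exchange_big.
  apply: eq_bigr => d _; rewrite scaler_suml; apply: eq_bigr => b _; by rewrite scalerA.
apply: eq_bigr => c _; apply: eq_bigr => d _.
by case: HH => _ _ coassoc _ _; rewrite coassoc.
Qed.

Lemma sweedler_mulA (V : lmodType k) (f : A -> A -> V) x y : bilinear f ->
  sweedler (fun j l => f (e j) (e l)) (mul x y) =
  sweedler (fun a b => sweedler (fun c d => f (mul (e a) (e c)) (mul (e b) (e d))) y) x.
Proof.
move=> hf; case: HH => _ _ _ _ [[comulM _] _ _].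
transitivity (\sum_a \sum_b \sum_c \sum_d \sum_j \sum_l
   ((comulA H x a b * comulA H y c d) * (hmul H a c j * hmul H b d l)) *: f (e j) (e l)).
  rewrite /sweedler comulM.
  under [RHS]eq_bigr do under eq_bigr do rewrite exchange_big2.
  rewrite [RHS]exchange_big2.
  apply: eq_bigr => j _; apply: eq_bigr => l _; rewrite mxE scaler_suml.
  apply: eq_bigr => a _; rewrite scaler_suml; apply: eq_bigr => b _; rewrite scaler_suml.
  apply: eq_bigr => c _; rewrite scaler_suml; apply: eq_bigr => d _.
  by rewrite !mulrA.
apply: eq_bigr => a _; apply: eq_bigr => b _; rewrite scaler_sumr; apply: eq_bigr => c _.
rewrite scaler_sumr; apply: eq_bigr => d _.
rewrite scalerA (bilinear_bvec_expand _ _ hf) scaler_sumr; apply: eq_bigr => j _.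
by rewrite scaler_sumr; apply: eq_bigr => l _; rewrite scalerA !mulA_bvec.
Qed.

Lemma sweedler_one (V : lmodType k) (B : 'I_n -> 'I_n -> V) :
  sweedler B one = \sum_j \sum_l (one 0 j * one 0 l) *: B j l.
Proof.
case: HH => _ _ _ _ [[_ comul1] _ _]; rewrite /sweedler comul1.
by apply: eq_bigr => j _; apply: eq_bigr => l _; rewrite mxE big_ord1 !mxE.
Qed.

Lemma bilinear_antiA_mulA : bilinear (fun u v => mul (S u) v).
Proof. by split=> [v|u]; [exact: linear_comp linear_antiA (linear_mulAl v) | exact: linear_mulAr]. Qed.

Lemma antiA_one : S one = one.
Proof.
rewrite -[LHS]mulA1 (bilinear_bvec_expand _ _ bilinear_antiA_mulA) -sweedler_one.
by rewrite sweedler_antipodel epsA1 scale1r.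
Qed.

Lemma epsA_anti x : eps (S x) = eps x.
Proof.
have linear_epsS : linear (eps \o S : A -> k^o) := linear_comp linear_antiA linear_epsA.
move: x; apply: (linear_bvec_eq linear_epsS linear_epsA) => i /=.
have := congr1 eps (sweedler_antipodel (e i)).
rewrite (sweedler_map _ _ linear_epsA) (scalable_linear linear_epsA) epsA1.
rewrite [X in _ = X -> _]mulr1 => <-.
rewrite -[LHS](sweedler_counitr_bvec (fun a => eps (S (e a)) : k^o)).
by apply: eq_sweedler => j l; rewrite epsAM epsA_bvec mulrC.
Qed.

(* The convolution product of Hom(A (x) A, A), evaluated at [e p (x) e q]. *)
Definition conv2 (F G : 'I_n -> 'I_n -> A) (p q : 'I_n) : A :=
  sweedler (fun a b => sweedler (fun c d => mul (F a c) (G b d)) (e q)) (e p).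

Definition unit2 (p q : 'I_n) : A := (hcounit H p * hcounit H q) *: one.

Lemma eq_conv2 F F' G G' : F =2 F' -> G =2 G' -> conv2 F G =2 conv2 F' G'.
Proof.
move=> eqF eqG p q; apply: eq_sweedler => a b; apply: eq_sweedler => c d.
by rewrite eqF eqG.
Qed.

Lemma conv2_unitr F : conv2 F unit2 =2 F.
Proof.
move=> p q; rewrite -[RHS](sweedler_counitr_bvec (F^~ q)); apply: eq_sweedler => a b.
rewrite -(sweedler_counitr_bvec (F a) q) -sweedlerZ; apply: eq_sweedler => c d.
by rewrite (scalable_linear (linear_mulAr _)) mulA1 scalerA mulrC.
Qed.

Lemma conv2_unitl G : conv2 unit2 G =2 G.
Proof.
move=> p q; rewrite -[RHS](sweedler_counitl_bvec (G^~ q)); apply: eq_sweedler => a b.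
rewrite -(sweedler_counitl_bvec (G b) q) -sweedlerZ; apply: eq_sweedler => c d.
by rewrite (scalable_linear (linear_mulAl _)) mul1A scalerA.
Qed.

Lemma conv2A F G K : conv2 (conv2 F G) K =2 conv2 F (conv2 G K).
Proof.
move=> p q.
pose M a1 a2 a3 c1 c2 c3 := mul (F a1 c1) (mul (G a2 c2) (K a3 c3)).
transitivity (sweedler (fun a b => sweedler (fun a1 a2 =>
    sweedler (fun c d => sweedler (fun c1 c2 => M a1 a2 b c1 c2 d) (e c)) (e q)) (e a)) (e p)).
  apply: eq_sweedler => a b; rewrite sweedler_exchange; apply: eq_sweedler => c d.
  rewrite (sweedler_map _ _ (linear_mulAl _)); apply: eq_sweedler => a1 a2.
  rewrite (sweedler_map _ _ (linear_mulAl _)); apply: eq_sweedler => c1 c2.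
  by rewrite mulAA.
rewrite sweedler_coassoc; under eq_sweedler do under eq_sweedler do rewrite sweedler_coassoc.
rewrite /conv2; apply: eq_sweedler => a1 a; rewrite sweedler_exchange.
apply: eq_sweedler => c1 c.
rewrite (sweedler_map _ _ (linear_mulAr _)); apply: eq_sweedler => a2 a3.
by rewrite (sweedler_map _ _ (linear_mulAr _)).
Qed.

Lemma conv2_antiA_mulA :
  conv2 (fun p q => S (mul (e p) (e q))) (fun p q => mul (e p) (e q)) =2 unit2.
Proof.
move=> p q; rewrite /conv2 -(sweedler_mulA _ _ bilinear_antiA_mulA) sweedler_antipodel.
by rewrite epsAM !epsA_bvec.
Qed.

Lemma conv2_mulA_antiA :
  conv2 (fun p q => mul (e p) (e q)) (fun p q => mul (S (e q)) (S (e p))) =2 unit2.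
Proof.
move=> p q; rewrite /conv2 /unit2 mulrC -scalerA -(epsA_bvec p) -sweedler_antipoder.
rewrite -sweedlerZ.
apply: eq_sweedler => a b.
transitivity (mul (mul (e a) (sweedler (fun c d => mul (e c) (S (e d))) (e q))) (S (e b))).
  rewrite (sweedler_map _ _ (linear_mulAr _)) (sweedler_map _ _ (linear_mulAl _)).
  by apply: eq_sweedler => c d; rewrite !mulAA.
rewrite sweedler_antipoder epsA_bvec (scalable_linear (linear_mulAr _)) mulA1.
by rewrite (scalable_linear (linear_mulAl _)).
Qed.

Lemma antiA_mulA x y : S (mul x y) = mul (S y) (S x).
Proof.
pose S_mul p q := S (mul (e p) (e q)); pose mul_S p q := mul (S (e q)) (S (e p)).
have anti_bvec p q : S (mul (e p) (e q)) = mul (S (e q)) (S (e p)).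
  rewrite -[LHS](conv2_unitr S_mul) -[RHS](conv2_unitl mul_S).
  rewrite -(eq_conv2 (fun _ _ => erefl) conv2_mulA_antiA p q).
  by rewrite -(eq_conv2 conv2_antiA_mulA (fun _ _ => erefl)) conv2A.
have hl : bilinear (fun x y => S (mul x y)).
  by split=> [v|u]; apply: linear_comp linear_antiA; [exact: linear_mulAl | exact: linear_mulAr].
have hr : bilinear (fun x y => mul (S y) (S x)).
  split=> [v|u]; [exact: linear_comp linear_antiA (linear_mulAr _) |].
  exact: linear_comp linear_antiA (linear_mulAl _).
rewrite (bilinear_bvec_expand _ _ hl) (bilinear_bvec_expand _ _ hr).
by do 2!apply: eq_bigr => ? _; rewrite anti_bvec.
Qed.

(* Anti-comultiplicativity is the same uniqueness argument in Hom(A, A (x) A), where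
   (Delta o S) * Delta = 1 = Delta * (tau o (S (x) S) o Delta).  Tensors are only seen through
   bilinear maps, so associativity of this convolution is redone inside sweedler_antiA. *)
Lemma sweedler_antiA_comul (V : lmodType k) (K : A -> A -> V) i : bilinear K ->
  sweedler (fun g d => sweedler (fun u v => sweedler (fun p q =>
     K (mul (e u) (e p)) (mul (e v) (e q))) (e d)) (S (e g))) (e i) =
  hcounit H i *: K one one.
Proof.
move=> hK.
transitivity (sweedler (fun g d =>
    sweedler (fun j l => K (e j) (e l)) (mul (S (e g)) (e d))) (e i)).
  by apply: eq_sweedler => g d; rewrite (sweedler_mulA _ _ hK).
rewrite -(sweedler_map _ _ (linear_sweedler _)) sweedler_antipodel epsA_bvec.
by rewrite (scalable_linear (linear_sweedler _)) sweedler_one -(bilinear_bvec_expand _ _ hK).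
Qed.

Lemma sweedler_comul_antiA_flip (V : lmodType k) (F : A -> A -> V) i : bilinear F ->
  sweedler (fun d c => sweedler (fun p q => sweedler (fun a b =>
     F (mul (e p) (S (e b))) (mul (e q) (S (e a)))) (e c)) (e d)) (e i) =
  hcounit H i *: F one one.
Proof.
move=> [hl hr].
rewrite (sweedler_coassoc (fun p q c => sweedler (fun a b =>
   F (mul (e p) (S (e b))) (mul (e q) (S (e a)))) (e c))).
under eq_sweedler => p c'.
  rewrite -(sweedler_coassoc (fun q a b => F (mul (e p) (S (e b))) (mul (e q) (S (e a))))).
  under eq_sweedler => r b.
    rewrite -(sweedler_map _ _ (hr _)) sweedler_antipoder epsA_bvec (scalable_linear (hr _)).
    over.
  rewrite /= (sweedler_counitl_bvec (fun b => F (mul (e p) (S (e b))) one)).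
  over.
by rewrite /= -(sweedler_map _ _ (hl _)) sweedler_antipoder epsA_bvec (scalable_linear (hl _)).
Qed.

Lemma sweedler_antiA (V : lmodType k) (f : A -> A -> V) x : bilinear f ->
  sweedler (fun j l => f (e j) (e l)) (S x) = sweedler (fun a b => f (S (e b)) (S (e a))) x.
Proof.
move=> hf; have [hl hr] := hf.
have linear_rhs : linear (sweedler (fun a b => f (S (e b)) (S (e a)))) := linear_sweedler _.
move: x; apply: (linear_bvec_eq (linear_comp linear_antiA (linear_sweedler _)) linear_rhs).
move=> i /=; symmetry.
pose K X Y := sweedler (fun a b => f (mul X (S (e b))) (mul Y (S (e a)))).
have hK c : bilinear (fun X Y => K X Y (e c)).
  split=> [Y|X]; apply: linear_sweedler_in => a b.
    exact: linear_comp (linear_mulAl _) (hl _).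
  exact: linear_comp (linear_mulAl _) (hr _).
transitivity (sweedler (fun g c => hcounit H g *: K one one (e c)) (e i)).
  rewrite sweedler_counitl_bvec; apply: eq_sweedler => a b; by rewrite !mul1A.
transitivity (sweedler (fun g c => sweedler (fun g1 d => sweedler (fun u v => sweedler (fun p q =>
    K (mul (e u) (e p)) (mul (e v) (e q)) (e c)) (e d)) (S (e g1))) (e g)) (e i)).
  by apply: eq_sweedler => g c; rewrite (sweedler_antiA_comul _ (hK c)).
rewrite (sweedler_coassoc (fun g1 d c => sweedler (fun u v => sweedler (fun p q =>
    K (mul (e u) (e p)) (mul (e v) (e q)) (e c)) (e d)) (S (e g1)))).
transitivity (sweedler (fun g d => hcounit H d *: sweedler (fun u v => f (e u) (e v)) (S (e g))) (e i));
  last exact: (sweedler_counitr_bvec (fun g => sweedler (fun u v => f (e u) (e v)) (S (e g)))).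
apply: eq_sweedler => g d; rewrite sweedler_exchange -sweedlerZ; apply: eq_sweedler => u v.
have hF : bilinear (fun X Y => f (mul (e u) X) (mul (e v) Y)).
  by split=> [Y|X]; [exact: linear_comp (linear_mulAr _) (hl _) | exact: linear_comp (linear_mulAr _) (hr _)].
rewrite -[in RHS](mulA1 (e u)) -[in RHS](mulA1 (e v)) -(sweedler_comul_antiA_flip d hF).
by do 3!apply: eq_sweedler => ? ?; rewrite !mulAA.
Qed.

Lemma linear_sw fs : linear (sw H fs).
Proof.
case: fs => [|F fs]; last exact: linear_sweedler.
by move=> c x y; rewrite /= (linear_epsA c x y) scalerDl scalerA.
Qed.

Lemma sw_rcons fs F x :
  sw H (rcons fs F) x = sweedler (fun j l => mul (sw H fs (e j)) (e l *m F)) x.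
Proof.
elim: fs x => [|G fs IH] x /=.
  transitivity (\sum_i x 0 i *: (e i *m F)).
    rewrite -sweedler_counitr; apply: eq_sweedler => j l.
    by rewrite (scalable_linear (linear_mulAr _)) mulA1 epsA_bvec.
  rewrite -sweedler_counitl; apply: eq_sweedler => j l.
  by rewrite (scalable_linear (linear_mulAl _)) mul1A epsA_bvec.
transitivity (sweedler (fun a b => sweedler (fun c d =>
    mul (e a *m G) (mul (sw H fs (e c)) (e d *m F))) (e b)) x).
  by apply: eq_sweedler => a b; rewrite IH (sweedler_map _ _ (linear_mulAr _)).
rewrite -(sweedler_coassoc (fun a c d => mul (e a *m G) (mul (sw H fs (e c)) (e d *m F)))).
apply: eq_sweedler => u d; rewrite (sweedler_map _ _ (linear_mulAl _)).
by apply: eq_sweedler => a c; rewrite mulAA.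
Qed.

Lemma antiA_sw fs x : (forall F, F \in fs -> forall z, S (z *m F) = S z *m F) ->
  S (sw H fs x) = sw H (rev fs) (S x).
Proof.
elim: fs x => [|F fs IH] x hF /=.
  by rewrite /antiA -scalemxAl -/(antiA H one) antiA_one epsA_anti.
have hrev : bilinear (fun u v => mul (sw H (rev fs) u) (v *m F)).
  split=> [v|u]; first exact: linear_comp (linear_sw _) (linear_mulAl _).
  exact: linear_comp (linear_mulmxr _) (linear_mulAr _).
rewrite rev_cons sw_rcons (sweedler_map _ _ linear_antiA).
transitivity (sweedler (fun a b => mul (sw H (rev fs) (S (e b))) (S (e a) *m F)) x);
  last exact/esym/(sweedler_antiA _ hrev).
apply: eq_sweedler => j l; rewrite antiA_mulA IH; last first.
  by move=> G hG; apply: hF; rewrite in_cons hG orbT.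
by rewrite hF // mem_head.
Qed.

Lemma sw_mulmx (M : 'M[k]_n) fs x :
  (forall u v, mul (u *m M) (v *m M) = mul u v *m M) -> one *m M = one ->
  sw H fs x *m M = sw H [seq F *m M | F <- fs] x.
Proof.
move=> hM h1; elim: fs x => [|F fs IH] x /=; first by rewrite -scalemxAl h1.
rewrite (sweedler_map _ _ (linear_mulmxr _)).
by apply: eq_sweedler => j l; rewrite -hM IH mulmxA.
Qed.

Lemma sweedler_rint (V : lmodType k) (g : A -> A -> V) L u :
  bilinear g -> right_integral H L ->
  sweedler (fun a c => sweedler (fun j l => g (mul (e j) (e a)) (mul (e l) (e c))) L) (e u) =
  hcounit H u *: sweedler (fun j l => g (e j) (e l)) L.
Proof.
by move=> hg hL; rewrite -sweedler_exchange -(sweedler_mulA _ _ hg) hL epsA_bvec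
  (scalable_linear (linear_sweedler _)).
Qed.

Lemma sweedler_lint (V : lmodType k) (g : A -> A -> V) L u :
  bilinear g -> left_integral H L ->
  sweedler (fun a c => sweedler (fun j l => g (mul (e a) (e j)) (mul (e c) (e l))) L) (e u) =
  hcounit H u *: sweedler (fun j l => g (e j) (e l)) L.
Proof.
by move=> hg hL; rewrite -(sweedler_mulA _ _ hg) hL epsA_bvec
  (scalable_linear (linear_sweedler _)).
Qed.

Lemma rint_sweedler_swap (V : lmodType k) (g : A -> A -> V) L x :
  bilinear g -> right_integral H L ->
  sweedler (fun j l => g (mul (e j) x) (e l)) L =
  sweedler (fun j l => g (e j) (mul (e l) (S x))) L.
Proof.
move=> [hl hr] hL; move: x; apply: linear_bvec_eq.
- by apply: linear_sweedler_in => j l; exact: linear_comp (linear_mulAr _) (hl _).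
- apply: linear_sweedler_in => j l.
  exact: linear_comp (linear_comp linear_antiA (linear_mulAr _)) (hr _).
move=> i; pose gS d X Y := g X (mul Y (S (e d))).
have hgS d : bilinear (gS d).
  by split=> [Y|X]; [exact: hl | exact: linear_comp (linear_mulAl _) (hr _)].
transitivity (sweedler (fun u d => sweedler (fun a c =>
    sweedler (fun j l => gS d (mul (e j) (e a)) (mul (e l) (e c))) L) (e u)) (e i));
  last first.
  under eq_sweedler do rewrite (sweedler_rint _ (hgS _) hL).
  exact: (sweedler_counitl_bvec (fun d => sweedler (fun j l => gS d (e j) (e l)) L)).
rewrite (sweedler_coassoc (fun a c d =>
    sweedler (fun j l => gS d (mul (e j) (e a)) (mul (e l) (e c))) L)).
rewrite -(sweedler_counitr_bvec (fun a => sweedler (fun j l => g (mul (e j) (e a)) (e l)) L)).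
apply: eq_sweedler => a b; rewrite sweedler_exchange -sweedlerZ; apply: eq_sweedler => j l.
transitivity (g (mul (e j) (e a)) (mul (e l) (sweedler (fun c d => mul (e c) (S (e d))) (e b)))).
  rewrite sweedler_antipoder epsA_bvec (scalable_linear (linear_mulAr _)) mulA1.
  by rewrite (scalable_linear (hr _)).
rewrite (sweedler_map _ _ (linear_mulAr _)) (sweedler_map _ _ (hr _)).
by apply: eq_sweedler => c d; rewrite /gS mulAA.
Qed.

Lemma lint_sweedler_swap (V : lmodType k) (g : A -> A -> V) L x :
  bilinear g -> left_integral H L ->
  sweedler (fun j l => g (e j) (mul x (e l))) L =
  sweedler (fun j l => g (mul (S x) (e j)) (e l)) L.
Proof.
move=> [hl hr] hL; move: x; apply: linear_bvec_eq.
- by apply: linear_sweedler_in => j l; exact: linear_comp (linear_mulAl _) (hr _).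
- apply: linear_sweedler_in => j l.
  exact: linear_comp (linear_comp linear_antiA (linear_mulAl _)) (hl _).
move=> i; pose gS c X Y := g (mul (S (e c)) X) Y.
have hgS c : bilinear (gS c).
  by split=> [Y|X]; [exact: linear_comp (linear_mulAr _) (hl _) | exact: hr].
transitivity (sweedler (fun c u => sweedler (fun d b =>
    sweedler (fun j l => gS c (mul (e d) (e j)) (mul (e b) (e l))) L) (e u)) (e i));
  last first.
  under eq_sweedler do rewrite (sweedler_lint _ (hgS _) hL).
  exact: (sweedler_counitr_bvec (fun c => sweedler (fun j l => gS c (e j) (e l)) L)).
rewrite -(sweedler_coassoc (fun c d b =>
    sweedler (fun j l => gS c (mul (e d) (e j)) (mul (e b) (e l))) L)).
rewrite -(sweedler_counitl_bvec (fun b => sweedler (fun j l => g (e j) (mul (e b) (e l))) L)).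
apply: eq_sweedler => a b; rewrite sweedler_exchange -sweedlerZ; apply: eq_sweedler => j l.
transitivity (g (mul (sweedler (fun c d => mul (S (e c)) (e d)) (e a)) (e j)) (mul (e b) (e l))).
  rewrite sweedler_antipodel epsA_bvec (scalable_linear (linear_mulAl _)) mul1A.
  by rewrite (scalable_linear (hl _)).
rewrite (sweedler_map _ _ (linear_mulAl _)) (sweedler_map _ _ (hl _)).
by apply: eq_sweedler => c d; rewrite /gS mulAA.
Qed.

Lemma evalf_delta (v : A) l : evalf (delta_mx l 0) v = v 0 l.
Proof.
rewrite /evalf mxE (bigD1 l) //= big1 ?addr0 ?mxE ?eqxx ?mulr1 //.
by move=> p /negbTE pl; rewrite mxE pl mulr0.
Qed.

Lemma sweedler_rint_dual lam x : right_integral_dual H lam ->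
  sweedler (fun j l => lam j 0 *: e l) x = evalf lam x *: one.
Proof.
move=> hlam; move: x; apply: linear_bvec_eq => [||i].
- exact: linear_sweedler.
- exact: linear_scale_const (linear_evalf _).
rewrite sweedler_bvec exchange_big evalf_bvec [X in _ = _ *: X]row_sum_delta scaler_sumr.
apply: eq_bigr => l _.
have coef : \sum_j hcomul H i j l * lam j 0 = one 0 l * lam i 0.
  have := congr1 (fun M : 'cV_n => M i 0) (hlam (delta_mx l 0)).
  rewrite /= evalf_delta !mxE => <-; apply: eq_bigr => j _.
  rewrite (bigD1 l) //= big1 ?addr0 ?mxE ?eqxx ?mulr1 // => p /negbTE pl.
  by rewrite mxE pl mulr0.
rewrite scalerA mulrC -coef scaler_suml; apply: eq_bigr => j _.
by rewrite scalerA.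
Qed.

Lemma sweedler_lint_dual lam x : left_integral_dual H lam ->
  sweedler (fun j l => lam l 0 *: e j) x = evalf lam x *: one.
Proof.
move=> hlam; move: x; apply: linear_bvec_eq => [||i].
- exact: linear_sweedler.
- exact: linear_scale_const (linear_evalf _).
rewrite sweedler_bvec evalf_bvec [X in _ = _ *: X]row_sum_delta scaler_sumr.
apply: eq_bigr => j _.
have coef : \sum_l hcomul H i j l * lam l 0 = one 0 j * lam i 0.
  have := congr1 (fun M : 'cV_n => M i 0) (hlam (delta_mx j 0)).
  rewrite /= evalf_delta !mxE => <-; rewrite [in RHS](bigD1 j) //= [X in _ + X]big1 ?addr0.
    by apply: eq_bigr => l _; rewrite mxE !eqxx mulr1.
  by move=> p /negbTE pj; rewrite big1 // => l _; rewrite mxE pj mulr0 mul0r.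
rewrite scalerA mulrC -coef scaler_suml; apply: eq_bigr => l _.
by rewrite scalerA.
Qed.

Lemma bilinear_evalfZ lam : bilinear (fun u v : A => evalf lam u *: v).
Proof.
split=> [v|u]; first exact: linear_scale_const (linear_evalf _).
by move=> a x y; rewrite scalerDr scalerA mulrC -scalerA.
Qed.

Lemma bilinear_evalfZ_flip lam : bilinear (fun u v : A => evalf lam v *: u).
Proof.
split=> [v|u]; last exact: linear_scale_const (linear_evalf _).
by move=> a x y; rewrite scalerDr scalerA mulrC -scalerA.
Qed.

Lemma antiA_rint lam L x :
  right_integral H L -> right_integral_dual H lam -> evalf lam L = 1 ->
  S x = sweedler (fun j l => evalf lam (mul (e j) x) *: e l) L.
Proof.
move=> hL hlam lamL.
rewrite (rint_sweedler_swap _ (bilinear_evalfZ lam) hL).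
transitivity (mul (sweedler (fun j l => lam j 0 *: e l) L) (S x)).
  by rewrite sweedler_rint_dual // lamL scale1r mul1A.
rewrite (sweedler_map _ _ (linear_mulAl _)); apply: eq_sweedler => j l.
by rewrite (scalable_linear (linear_mulAl _)) evalf_bvec.
Qed.

Lemma antiA_lint lam L x :
  left_integral H L -> left_integral_dual H lam -> evalf lam L = 1 ->
  S x = sweedler (fun j l => evalf lam (mul x (e l)) *: e j) L.
Proof.
move=> hL hlam lamL.
rewrite (lint_sweedler_swap _ (bilinear_evalfZ_flip lam) hL).
transitivity (mul (S x) (sweedler (fun j l => lam l 0 *: e j) L)).
  by rewrite sweedler_lint_dual // lamL scale1r mulA1.
rewrite (sweedler_map _ _ (linear_mulAr _)); apply: eq_sweedler => j l.
by rewrite (scalable_linear (linear_mulAr _)) evalf_bvec.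
Qed.

Lemma sweedler_bvec_entry (c : 'I_n -> 'I_n -> k) x i :
  (sweedler (fun j l => c j l *: e l) x) 0 i = \sum_j comulA H x j i * c j i.
Proof.
rewrite summxE; apply: eq_bigr => j _; rewrite summxE (bigD1 i) //= big1 ?addr0.
  by rewrite !mxE !eqxx mulr1.
by move=> l li; rewrite !mxE eqxx eq_sym (negbTE li) !mulr0.
Qed.

Lemma sweedler_bvec_entry_flip (c : 'I_n -> 'I_n -> k) x i :
  (sweedler (fun j l => c j l *: e j) x) 0 i = \sum_l comulA H x i l * c i l.
Proof.
rewrite summxE (bigD1 i) //= [X in _ + X]big1 ?addr0.
  by rewrite summxE; apply: eq_bigr => l _; rewrite !mxE !eqxx mulr1.
move=> j ji; rewrite summxE big1 // => l _.
by rewrite !mxE eqxx eq_sym (negbTE ji) !mulr0.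
Qed.

Lemma mxtrace_antiA_rint lam L (h : A -> A) :
  right_integral H L -> right_integral_dual H lam -> evalf lam L = 1 ->
  \tr (mx_of_fun (fun x => S (h x))) =
  evalf lam (sweedler (fun j l => mul (e j) (h (e l))) L).
Proof.
move=> hL hlam lamL; rewrite (sweedler_map _ _ (linear_evalf lam)) /sweedler exchange_big.
apply: eq_bigr => i _; rewrite mxE (antiA_rint _ hL hlam lamL) sweedler_bvec_entry.
by apply: eq_bigr.
Qed.

Lemma mxtrace_antiA_lint lam L (h : A -> A) :
  left_integral H L -> left_integral_dual H lam -> evalf lam L = 1 ->
  \tr (mx_of_fun (fun x => S (h x))) =
  evalf lam (sweedler (fun j l => mul (h (e j)) (e l)) L).
Proof.
move=> hL hlam lamL; rewrite (sweedler_map _ _ (linear_evalf lam)) /sweedler.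
apply: eq_bigr => i _; rewrite mxE (antiA_lint _ hL hlam lamL) sweedler_bvec_entry_flip.
by apply: eq_bigr.
Qed.

Section Indicator.
Variables (T : 'M[k]_n) (m : nat).
Hypotheses (hT : is_hopf_aut H T) (m_gt0 : (0 < m)%N) (hTm : T ^+ m = 1%:M).

Let antiA_mulmx_expT j z : S (z *m T ^+ j) = S z *m T ^+ j.
Proof.
case: hT => _ _ _ _ antiA_T; elim: j z => [|j IH] z; first by rewrite expr0 !mulmx1.
by rewrite exprS -mulmxE !mulmxA IH antiA_T.
Qed.

Lemma nu_rint Lr lr : right_integral H Lr -> right_integral_dual H lr -> evalf lr Lr = 1 ->
  nu H m T = evalf lr (hbracket H m T Lr).
Proof.
move=> hL hlr lrL; case: m m_gt0 hTm => [//|N] _ _.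
set Q := [seq T ^+ i | i <- iota 1 N].
have -> : nu H N.+1 T = \tr (mx_of_fun (sw H Q \o S)).
  congr (\tr _); apply: eq_mx_of_fun => i /=.
  rewrite antiA_sw ?rev_map_iota_sub // => F /mapP[j _ ->] z.
  exact: antiA_mulmx_expT.
rewrite (mxtrace_mx_of_fun_compC linear_antiA (linear_sw Q)).
rewrite (mxtrace_antiA_rint (sw H Q) hL hlr lrL) /hbracket /=.
by congr (evalf lr _); apply: eq_sweedler => j l; rewrite expr0 mulmx1.
Qed.

Let invT_unit : T \in unitmx. Proof. by case: hT. Qed.

Let mulA_mulmx_invT u v : mul (u *m invmx T) (v *m invmx T) = mul u v *m invmx T.
Proof.
have invTK (w : A) : w *m invmx T *m T = w by rewrite -mulmxA mulVmx // mulmx1.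
case: hT => _ [mulT _] _ _ _.
by rewrite -[in RHS](invTK u) -[in RHS](invTK v) mulT -mulmxA mulmxV // mulmx1.
Qed.

Let oneA_mulmx_invT : one *m invmx T = one.
Proof. by case: hT => _ [_ oneT] _ _ _; rewrite -[in LHS]oneT -mulmxA mulmxV // mulmx1. Qed.

Let map_invT_expS :
  [seq invmx T ^+ i *m invmx T | i <- iota 0 m] = rcons [seq T ^+ (m.-1 - i) | i <- iota 0 m.-1] 1%:M.
Proof.
have invTT : invmx T * T = 1 := mulVmx invT_unit.
have Tm : T ^+ m.-1.+1 = 1 by rewrite prednK.
have invT_expS i : (i <= m.-1)%N -> invmx T ^+ i *m invmx T = T ^+ (m.-1 - i).
  by move=> le_im; rewrite -(exprS_linv_cyclic invTT Tm le_im) exprSr.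
rewrite -(prednK m_gt0) -/(mkseq _ m.-1.+1) mkseqS /= invT_expS // subnn expr0.
congr rcons; apply/eq_in_map => i; rewrite mem_iota add0n => /andP[_ lt_im].
exact/invT_expS/ltnW.
Qed.

Lemma nu_lint Ll ll : left_integral H Ll -> left_integral_dual H ll -> evalf ll Ll = 1 ->
  nu H m T = evalf ll (hbracket H m (invmx T) Ll *m invmx T).
Proof.
move=> hL hll llL; rewrite /nu (mxtrace_antiA_lint _ hL hll llL) /hbracket.
rewrite (sw_mulmx _ _ mulA_mulmx_invT oneA_mulmx_invT) -map_comp map_invT_expS sw_rcons.
by congr (evalf ll _); apply: eq_sweedler => j l; rewrite mulmx1.
Qed.

End Indicator.

End HopfAlgebra.

Theorem corollary5p2 (k : fieldType) (n : nat) (H : hopf_data k n)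
  (HH : is_hopf H) (T : 'M[k]_n) (hT : is_hopf_aut H T)
  (m : nat) (hm : (0 < m)%N) (hTm : T ^+ m = 1%:M) :
  (forall (Lr : 'rV[k]_n) (lr : 'cV[k]_n),
     right_integral H Lr -> right_integral_dual H lr -> evalf lr Lr = 1 ->
     nu H m T = evalf lr (hbracket H m T Lr))
  /\
  (forall (Ll : 'rV[k]_n) (ll : 'cV[k]_n),
     left_integral H Ll -> left_integral_dual H ll -> evalf ll Ll = 1 ->
     nu H m T = evalf ll (hbracket H m (invmx T) Ll *m invmx T)).
Proof. by split=> ? ?; [exact: (nu_rint HH hT hm hTm) | exact: (nu_lint HH hT hm hTm)]. Qed.
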